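(* Let $p,r$ be positive integers and $q=p+r$. Then the map $\Phi:U_{pq}(\mathbb{H})\to\mathbb{H}^{r\times p}$, $\Phi(Q)=Q_2(Q_0-Q_1)^{-1}$, is a $\mathbf{GL}_p(\mathbb{H})$-invariant harmonic map on $U_{pq}(\mathbb{H})$, equipped with the semi-Euclidean metric (and $\mathbb{H}^{r\times p}$ with its flat metric).
   Context: Elements of $\mathbb{H}^{(p+q)\times p}$ are written $Q=(Q_0;Q_1;Q_2)$ with $Q_0,Q_1\in\mathbb{H}^{p\times p}$, $Q_2\in\mathbb{H}^{r\times p}$. $U_{pq}(\mathbb{H})=\{Q: -Q_0^*Q_0+Q_1^*Q_1+Q_2^*Q_2<0\}$, meaning $x^*(\cdot)x<0$ for every non-zero $x\in\mathbb{H}^p$; on it $Q_0-Q_1$ is invertible. $\mathbf{GL}_p(\mathbb{H})$ acts by right multiplication. The semi-Euclidean metric is $(X,Y)=\mathfrak{Re}\,\mathrm{trace}(X^*\mathrm{diag}(-I_p,I_q)Y)$. Harmonic means vanishing tension field, i.e. every real component of $\Phi$ is annihilated by the Laplace–Beltrami operator of the semi-Euclidean metric. *)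

From HB Require Import structures.
From mathcomp Require Import all_boot all_order all_algebra.
From mathcomp Require Import all_classical all_reals all_analysis.
From Stdlib Require Import ClassicalEpsilon.

Set Implicit Arguments.
Unset Strict Implicit.
Unset Printing Implicit Defensive.

Import Order.TTheory GRing.Theory Num.Theory.
Import numFieldNormedType.Exports.
Local Open Scope ring_scope.

(* Quaternion matrices.  A matrix X in H^{m x n} is written uniquely as      *)
(*   X = A + B i + C j + D k   with A, B, C, D real m x n matrices;          *)
(* we represent it by the tuple (((A, B), C), D).  This type is a real       *)
(* normed vector space (product of real matrix spaces), which is exactly the *)
(* underlying real vector space of H^{m x n}, with the real coordinates of   *)
(* the quaternion entries as coordinates.                                   *)

Definition hmx (R : realType) (m n : nat) : Type :=
  ('M[R]_(m, n) * 'M[R]_(m, n) * 'M[R]_(m, n) * 'M[R]_(m, n))%type.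

Section Quat.
Variable R : realType.

Definition hre {m n} (X : hmx R m n) : 'M[R]_(m, n) := X.1.1.1.
Definition him {m n} (X : hmx R m n) : 'M[R]_(m, n) := X.1.1.2.
Definition hjm {m n} (X : hmx R m n) : 'M[R]_(m, n) := X.1.2.
Definition hkm {m n} (X : hmx R m n) : 'M[R]_(m, n) := X.2.

Definition hmk {m n} (A B C D : 'M[R]_(m, n)) : hmx R m n := (A, B, C, D).

(* real component number c (0 = real part, 1 = i, 2 = j, 3 = k) *)
Definition hcomp {m n} (c : 'I_4) (X : hmx R m n) : 'M[R]_(m, n) :=
  match val c with
  | 0 => hre X | 1 => him X | 2 => hjm X | _ => hkm X
  end.

Definition hinj {m n} (c : 'I_4) (M : 'M[R]_(m, n)) : hmx R m n :=
  match val c with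
  | 0 => hmk M 0 0 0 | 1 => hmk 0 M 0 0 | 2 => hmk 0 0 M 0 | _ => hmk 0 0 0 M
  end.

(* quaternion matrix product (Hamilton rules ij = k, jk = i, ki = j) *)
Definition hmul {m n k} (X : hmx R m n) (Y : hmx R n k) : hmx R m k :=
  let a := hre X in let b := him X in let c := hjm X in let d := hkm X in
  let a' := hre Y in let b' := him Y in let c' := hjm Y in let d' := hkm Y in
  hmk (a *m a' - b *m b' - c *m c' - d *m d')
      (a *m b' + b *m a' + c *m d' - d *m c')
      (a *m c' - b *m d' + c *m a' + d *m b')
      (a *m d' + b *m c' - c *m b' + d *m a').

Definition hadj {m n} (X : hmx R m n) : hmx R n m :=
  hmk (hre X)^T (- (him X)^T) (- (hjm X)^T) (- (hkm X)^T).

Definition hone n : hmx R n n := hmk 1%:M 0 0 0.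

Definition hinvertible {n} (A : hmx R n n) : Prop :=
  exists B : hmx R n n, hmul A B = hone n /\ hmul B A = hone n.

(* the inverse A^{-1} (chosen classically; meaningful when A is invertible) *)
Definition hinv {n} (A : hmx R n n) : hmx R n n :=
  epsilon (inhabits (0 : hmx R n n))
          (fun B => hmul A B = hone n /\ hmul B A = hone n).

Definition hnegdef {n} (M : hmx R n n) : Prop :=
  forall x : hmx R n 1, x <> 0 -> hre (hmul (hadj x) (hmul M x)) 0 0 < 0.

(* The domain H^{(p+q) x p}, q = p + r, written Q = (Q0; Q1; Q2).            *)

Definition Hdom (p r : nat) : Type := (hmx R p p * hmx R p p * hmx R r p)%type.

Definition Q0 {p r} (Q : Hdom p r) : hmx R p p := Q.1.1.
Definition Q1 {p r} (Q : Hdom p r) : hmx R p p := Q.1.2.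
Definition Q2 {p r} (Q : Hdom p r) : hmx R r p := Q.2.

Definition Upq {p r} : set (Hdom p r) := fun Q =>
  hnegdef (- hmul (hadj (Q0 Q)) (Q0 Q) + hmul (hadj (Q1 Q)) (Q1 Q)
           + hmul (hadj (Q2 Q)) (Q2 Q)).

Definition hact {p r} (Q : Hdom p r) (g : hmx R p p) : Hdom p r :=
  (hmul (Q0 Q) g, hmul (Q1 Q) g, hmul (Q2 Q) g).

Definition Phi {p r} (Q : Hdom p r) : hmx R r p :=
  hmul (Q2 Q) (hinv (Q0 Q - Q1 Q)).

(* Standard real coordinate directions of the domain: the quaternion matrix *)
(* units E = e_c * delta_{ij} placed in block 0, 1 or 2.  They are          *)
(* orthonormal for |(.,.)|, with (E,E) = -1 in block 0 and +1 in blocks 1,2 *)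
Definition dir0 {p r} (c : 'I_4) (i j : 'I_p) : Hdom p r :=
  (hinj c (delta_mx i j), 0, 0).
Definition dir1 {p r} (c : 'I_4) (i j : 'I_p) : Hdom p r :=
  (0, hinj c (delta_mx i j), 0).
Definition dir2 {p r} (c : 'I_4) (i : 'I_r) (j : 'I_p) : Hdom p r :=
  (0, 0, hinj c (delta_mx i j)).

(* Laplace-Beltrami operator of the semi-Euclidean metric                   *)
(*   (X, Y) = Re trace (X^* diag(-I_p, I_q) Y)                              *)
(* in these orthonormal coordinates: sum_k eps_k d^2 f / dx_k^2.            *)
Definition semiLaplacian {p r} (f : Hdom p r -> R) (Q : Hdom p r) : R :=
  - (\sum_(c < 4) \sum_(i < p) \sum_(j < p)
       'D_(dir0 c i j) ('D_(dir0 c i j) f) Q)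
  + (\sum_(c < 4) \sum_(i < p) \sum_(j < p)
       'D_(dir1 c i j) ('D_(dir1 c i j) f) Q)
  + (\sum_(c < 4) \sum_(i < r) \sum_(j < p)
       'D_(dir2 c i j) ('D_(dir2 c i j) f) Q).

(* F : U -> H^{r x p} (flat target) is harmonic on U: every real component *)
(* is twice differentiable on U (differentiable, with differentiable        *)
(* directional derivatives) and is annihilated by the Laplace-Beltrami      *)
(* operator of the semi-Euclidean metric.                                  *)
Definition harmonic_on {p r} (U : set (Hdom p r)) (F : Hdom p r -> hmx R r p)
  : Prop :=
  forall (c : 'I_4) (a : 'I_r) (b : 'I_p),
    let f := fun Q => hcomp c (F Q) a b in
    forall Q, U Q ->
      [/\ differentiable f Q,
          (forall v : Hdom p r, differentiable ('D_v f) Q)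
        & semiLaplacian f Q = 0].

End Quat.

(* Write A = Q0 - Q1 and let F(Q) be the hermitian form of U.
   Then F(Q g) = g^* F(Q) g and Phi (Q g) = Q2 g (A g)^-1 = Phi Q.  On U the
   matrix A is injective, since A x = 0 gives x^* F(Q) x = |Q2 x|^2 >= 0; it is
   therefore invertible, as its real 4p x 4p matrix of left multiplication is.

   Phi only depends on Q0 - Q1 and Q2, and it is affine in Q2.
   By the first fact, the second derivative of Phi along a coordinate direction
   E of the Q1 block equals the one along -E, hence along E, in the Q0 block:
   these cancel in the Laplacian of signature (-, +).  By the second fact the
   Q2 terms vanish.  Smoothness comes from Cramer's rule: the real coordinates
   of Phi are rational functions with denominator det (lmul_mx A), nonzero on
   U, and such functions have differentiable directional derivatives of all
   orders off the zero set of the denominator. *)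

From HB Require Import structures.
From mathcomp Require Import all_boot all_order all_algebra.
From mathcomp Require Import all_classical all_reals all_analysis.
From mathcomp Require Import ring.
From Stdlib Require Import ClassicalEpsilon.

Set Implicit Arguments.
Unset Strict Implicit.
Unset Printing Implicit Defensive.

Import Order.TTheory GRing.Theory Num.Theory.
Import numFieldNormedType.Exports.
Local Open Scope ring_scope.

Lemma trmxD (R : nmodType) m n (A B : 'M[R]_(m, n)) : (A + B)^T = A^T + B^T.
Proof. by apply/matrixP => i j; rewrite !mxE. Qed.

Lemma trmxN (R : zmodType) m n (A : 'M[R]_(m, n)) : (- A)^T = - A^T.
Proof. by apply/matrixP => i j; rewrite !mxE. Qed.

(* After distributing, every product of matrices is generalized to a variable;
   the identity then holds entrywise in a commutative ring. *)
Local Ltac distr_mx_ring :=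
  rewrite ?(trmxD, trmxN, trmx_mul, mulmxDl, mulmxDr, mulmxBl, mulmxBr,
            mulNmx, mulmxN, mulmxA, mul0mx, mulmx0, mul1mx, mulmx1, opprK);
  rewrite -?scalemxAl;
  repeat match goal with
         |- context [?a *m ?b] => let t := fresh in set t := a *m b; clearbody t end;
  apply/matrixP => ? ?; rewrite !mxE; ring.

Section QuaternionMatrices.
Variable R : realType.
Implicit Types m n k l : nat.

Lemma hmx_ext m n (X Y : hmx R m n) :
  hre X = hre Y -> him X = him Y -> hjm X = hjm Y -> hkm X = hkm Y -> X = Y.
Proof.
case: X Y => [[[? ?] ?] ?] [[[? ?] ?] ?].
by rewrite /hre /him /hjm /hkm /= => -> -> -> ->.
Qed.

Local Ltac hmx_ring :=
  apply: hmx_ext; rewrite /hmul /hadj /hone /hmk /hre /him /hjm /hkm /=;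
  distr_mx_ring.

Lemma hmulA m n k l (X : hmx R m n) (Y : hmx R n k) (Z : hmx R k l) :
  hmul (hmul X Y) Z = hmul X (hmul Y Z).
Proof. hmx_ring. Qed.

Lemma hmulDl m n k (X Y : hmx R m n) (Z : hmx R n k) :
  hmul (X + Y) Z = hmul X Z + hmul Y Z.
Proof. hmx_ring. Qed.

Lemma hmulDr m n k (X : hmx R m n) (Y Z : hmx R n k) :
  hmul X (Y + Z) = hmul X Y + hmul X Z.
Proof. hmx_ring. Qed.

Lemma hmulNl m n k (X : hmx R m n) (Y : hmx R n k) : hmul (- X) Y = - hmul X Y.
Proof. hmx_ring. Qed.

Lemma hmulBl m n k (X Y : hmx R m n) (Z : hmx R n k) :
  hmul (X - Y) Z = hmul X Z - hmul Y Z.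
Proof. by rewrite hmulDl hmulNl. Qed.

Lemma hmulNr m n k (X : hmx R m n) (Y : hmx R n k) : hmul X (- Y) = - hmul X Y.
Proof. hmx_ring. Qed.

Lemma hmulZl m n k (a : R) (X : hmx R m n) (Y : hmx R n k) :
  hmul (a *: X) Y = a *: hmul X Y.
Proof. hmx_ring. Qed.

Lemma hmulr0 m n k (X : hmx R m n) : hmul X (0 : hmx R n k) = 0.
Proof. hmx_ring. Qed.

Lemma hmul1l m n (X : hmx R m n) : hmul (hone R m) X = X.
Proof. hmx_ring. Qed.

Lemma hmul1r m n (X : hmx R m n) : hmul X (hone R n) = X.
Proof. hmx_ring. Qed.

Lemma hadj_mul m n k (X : hmx R m n) (Y : hmx R n k) :
  hadj (hmul X Y) = hmul (hadj Y) (hadj X).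
Proof. hmx_ring. Qed.

Lemma hnorm2_ge0 m (x : hmx R m 1) : 0 <= hre (hmul (hadj x) x) 0 0.
Proof.
rewrite /hmul /hadj /hmk /hre /him /hjm /hkm /= !mulNmx !opprK !mxE.
by do 3?apply: addr_ge0; apply: sumr_ge0 => k _; rewrite mxE -expr2 sqr_ge0.
Qed.

Lemma hcompD c m n (X Y : hmx R m n) : hcomp c (X + Y) = hcomp c X + hcomp c Y.
Proof. by rewrite /hcomp; case: (val c) => [|[|[|?]]]. Qed.

Lemma hcompZ c m n (a : R) (X : hmx R m n) : hcomp c (a *: X) = a *: hcomp c X.
Proof. by rewrite /hcomp; case: (val c) => [|[|[|?]]]. Qed.

End QuaternionMatrices.

Section RealRepresentation.
Variable R : realType.
Implicit Types m n k : nat.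

Definition hvec m n (X : hmx R m n) : 'M[R]_(m + m + (m + m), n) :=
  col_mx (col_mx (hre X) (him X)) (col_mx (hjm X) (hkm X)).

Definition vec_hmx m n (M : 'M[R]_(m + m + (m + m), n)) : hmx R m n :=
  hmk (usubmx (usubmx M)) (dsubmx (usubmx M)) (usubmx (dsubmx M))
      (dsubmx (dsubmx M)).

Lemma hvecK m n : cancel (@hvec m n) (@vec_hmx m n).
Proof.
by move=> X; apply: hmx_ext; rewrite /hre /him /hjm /hkm /= !(col_mxKu, col_mxKd).
Qed.

Lemma vec_hmxK m n : cancel (@vec_hmx m n) (@hvec m n).
Proof. by move=> M; rewrite /hvec /= !vsubmxK. Qed.

Lemma hvec_inj m n : injective (@hvec m n).
Proof. exact: can_inj (@hvecK m n). Qed.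

Lemma hvec0 m n : hvec (0 : hmx R m n) = 0.
Proof. by rewrite /hvec /= !col_mx0. Qed.

(* [lmul_mx A] is the real matrix of [x |-> A x]: its block columns are the
   stacked components of A, A i, A j and A k. *)
Definition lmul_mx m n (A : hmx R m n) : 'M[R]_(m + m + (m + m), n + n + (n + n)) :=
  let a := hre A in let b := him A in let c := hjm A in let d := hkm A in
  row_mx (row_mx (hvec (hmk a b c d)) (hvec (hmk (- b) a d (- c))))
         (row_mx (hvec (hmk (- c) (- d) a b)) (hvec (hmk (- d) c (- b) a))).

Lemma lmul_mxE m n k (A : hmx R m n) (X : hmx R n k) :
  lmul_mx A *m hvec X = hvec (hmul A X).
Proof.
rewrite /lmul_mx {3}/hvec !mul_row_col /hvec !mul_col_mx !add_col_mx.
rewrite /hmul /hmk /hre /him /hjm /hkm /=.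
by congr (col_mx (col_mx _ _) (col_mx _ _)); distr_mx_ring.
Qed.

Lemma lmul_mx_unit n (A : hmx R n n) :
  (forall x : hmx R n 1, hmul A x = 0 -> x = 0) -> lmul_mx A \in unitmx.
Proof.
move=> injA; rewrite unitmxE unitfE -det_tr; apply/det0P => -[v nz_v vA].
have Av : hmul A (vec_hmx v^T) = 0.
  apply: hvec_inj; rewrite -lmul_mxE vec_hmxK hvec0.
  by rewrite -[LHS]trmxK trmx_mul trmxK vA trmx0.
have := congr1 (@hvec _ _) (injA _ Av); rewrite vec_hmxK hvec0 => vT0.
by rewrite -[v]trmxK vT0 trmx0 eqxx in nz_v.
Qed.

Definition hinvmx n (A : hmx R n n) : hmx R n n :=
  vec_hmx (invmx (lmul_mx A) *m hvec (hone R n)).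

Lemma hmul_hinvmx n (A : hmx R n n) :
  lmul_mx A \in unitmx -> hmul A (hinvmx A) = hone R n.
Proof. by move=> unitA; apply: hvec_inj; rewrite -lmul_mxE vec_hmxK mulKVmx. Qed.

(* [hinvmx A] is injective, so it has itself a right inverse, which must be A. *)
Lemma hinvmx_mul n (A : hmx R n n) :
  lmul_mx A \in unitmx -> hmul (hinvmx A) A = hone R n.
Proof.
move=> unitA; have unitB : lmul_mx (hinvmx A) \in unitmx.
  apply: lmul_mx_unit => x Bx.
  by rewrite -[x]hmul1l -(hmul_hinvmx unitA) hmulA Bx hmulr0.
have BC := hmul_hinvmx unitB.
have BA : hinvmx (hinvmx A) = A.
  by rewrite -[LHS]hmul1l -(hmul_hinvmx unitA) hmulA BC hmul1r.
by rewrite -{2}BA.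
Qed.

End RealRepresentation.

Section Inverse.
Variable R : realType.
Implicit Types n : nat.

Lemma hinvP n (A : hmx R n n) :
  hinvertible A -> hmul A (hinv A) = hone R n /\ hmul (hinv A) A = hone R n.
Proof. exact: epsilon_spec. Qed.

Lemma hinv_eq n (A B : hmx R n n) :
  hinvertible A -> hmul A B = hone R n -> hinv A = B.
Proof.
by move=> /hinvP[_ A'A] AB; rewrite -[LHS]hmul1r -AB -hmulA A'A hmul1l.
Qed.

Lemma hinvertible_inj n k (A : hmx R n n) (x : hmx R n k) :
  hinvertible A -> hmul A x = 0 -> x = 0.
Proof. by move=> /hinvP[_ A'A] Ax; rewrite -[x]hmul1l -A'A hmulA Ax hmulr0. Qed.

Lemma hinvertible_lmul_mx n (A : hmx R n n) :
  lmul_mx A \in unitmx -> hinvertible A.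
Proof. by move=> uA; exists (hinvmx A); rewrite hmul_hinvmx ?hinvmx_mul. Qed.

Lemma hinv_hinvmx n (A : hmx R n n) : lmul_mx A \in unitmx -> hinv A = hinvmx A.
Proof. by move=> uA; apply: hinv_eq (hinvertible_lmul_mx uA) (hmul_hinvmx uA). Qed.

Lemma hinvertible_mul n (A B : hmx R n n) :
  hinvertible A -> hinvertible B -> hinvertible (hmul A B).
Proof.
move=> /hinvP[AA' A'A] /hinvP[BB' B'B]; exists (hmul (hinv B) (hinv A)); split.
  by rewrite hmulA -(hmulA B) BB' hmul1l AA'.
by rewrite hmulA -(hmulA (hinv A)) A'A hmul1l B'B.
Qed.

Lemma hinv_mul n (A B : hmx R n n) : hinvertible A -> hinvertible B ->
  hinv (hmul A B) = hmul (hinv B) (hinv A).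
Proof.
move=> iA iB; apply: hinv_eq (hinvertible_mul iA iB) _.
by rewrite hmulA -(hmulA B) (hinvP iB).1 hmul1l (hinvP iA).1.
Qed.

Lemma hnegdef_congr n (M g : hmx R n n) :
  hinvertible g -> hnegdef M -> hnegdef (hmul (hadj g) (hmul M g)).
Proof.
move=> ig negM x nz_x.
have -> : hmul (hadj x) (hmul (hmul (hadj g) (hmul M g)) x) =
          hmul (hadj (hmul g x)) (hmul M (hmul g x)) by rewrite hadj_mul !hmulA.
by apply: negM => /(hinvertible_inj ig).
Qed.

End Inverse.

Section Domain.
Variables (R : realType) (p r : nat).
Implicit Types (Q : Hdom R p r) (g : hmx R p p).

Definition upq_form Q : hmx R p p :=
  - hmul (hadj (Q0 Q)) (Q0 Q) + hmul (hadj (Q1 Q)) (Q1 Q)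
  + hmul (hadj (Q2 Q)) (Q2 Q).

Lemma upq_form_act Q g :
  upq_form (hact Q g) = hmul (hadj g) (hmul (upq_form Q) g).
Proof.
rewrite /upq_form /hact /Q0 /Q1 /Q2 /= !hadj_mul.
by rewrite !(hmulDl, hmulNl, hmulDr, hmulNr) !hmulA.
Qed.

Lemma Upq_act Q g : hinvertible g -> Upq Q -> Upq (hact Q g).
Proof.
by move=> ig UQ; rewrite /Upq -/(upq_form _) upq_form_act; apply: hnegdef_congr.
Qed.

Lemma Upq_inj Q (x : hmx R p 1) : Upq Q -> hmul (Q0 Q - Q1 Q) x = 0 -> x = 0.
Proof.
move=> UQ; rewrite hmulBl => /subr0_eq Q01x; apply/eqP/negPn/negP => /eqP nz_x.
have := UQ x nz_x; rewrite -/(upq_form Q) /upq_form.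
rewrite !(hmulDl, hmulNl, hmulDr, hmulNr) -!hmulA -!hadj_mul !hmulA Q01x addNr add0r.
by rewrite ltNge hnorm2_ge0.
Qed.

Lemma Upq_lmul_mx_unit Q : Upq Q -> lmul_mx (Q0 Q - Q1 Q) \in unitmx.
Proof. by move=> UQ; apply: lmul_mx_unit => x; apply: Upq_inj. Qed.

Lemma Phi_act Q g : hinvertible g -> Upq Q -> Phi (hact Q g) = Phi Q.
Proof.
move=> ig /Upq_lmul_mx_unit/hinvertible_lmul_mx iA.
rewrite /Phi /hact /Q0 /Q1 /Q2 /= -hmulBl hinv_mul // hmulA -(hmulA g).
by rewrite (hinvP ig).1 hmul1l.
Qed.

End Domain.

Section LocalDifferentiability.
Variables (R : realType) (V : normedModType R).

Lemma near_eq_differentiable (f g : V -> R) (x : V) :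
  (\forall y \near x, f y = g y) -> differentiable f x -> differentiable g x.
Proof.
move=> fg df; have fgx : f x = g x := nbhs_singleton fg.
have fg0 : \forall h \near (0 : V), f (h + x) = g (h + x).
  by move: fg; rewrite (near_shift 0) subr0.
have dg : g \o shift x = cst (g x) + 'd f x +o_ 0 id.
  have /eqaddoP df0 := diff_locally df; apply/eqaddoP => e e0.
  by apply: filterS2 fg0 (df0 e e0) => h fgh; cbn; rewrite fgh fgx.
have dgf : 'd g x = 'd f x :> (V -> R).
  exact: diff_unique (diff_continuous df) dg.
by apply/diff_locallyP; rewrite dgf; split; [exact: diff_continuous|].
Qed.

Lemma deriveNr (f : V -> R) (x v : V) :
  differentiable f x -> 'D_(- v) f x = - 'D_v f x.
Proof. by move=> df; rewrite !deriveE // linearN. Qed.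

Lemma derive2Nr (f : V -> R) (x v : V) :
  (\forall y \near x, differentiable f y) -> differentiable ('D_v f) x ->
  'D_(- v) ('D_(- v) f) x = 'D_v ('D_v f) x.
Proof.
move=> df dDf.
have Df : \forall y \near x, 'D_(- v) f y = - 'D_v f y.
  by apply: filterS df => y; apply: deriveNr.
rewrite (near_eq_derive _ Df) (deriveN (diff_derivable dDf)) deriveNr //.
exact: opprK.
Qed.

End LocalDifferentiability.

Section LinearChangeOfVariables.
Variables (R : realType) (U V : normedModType R) (L : U -> V).
Hypothesis linL : linear L.

Lemma derive_comp_linear (f : V -> R) (x v : U) :
  'D_v (f \o L) x = 'D_(L v) f (L x).
Proof.
rewrite /derive.
suff -> : (fun h : R => h^-1 *: ((f \o L \o shift x) (h *: v) - f (L x))) =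
          (fun h : R => h^-1 *: ((f \o shift (L x)) (h *: L v) - f (L x))) by [].
by apply/funext => h /=; rewrite linL.
Qed.

Lemma derive2_comp_linear (f : V -> R) (x v : U) :
  'D_v ('D_v (f \o L)) x = 'D_(L v) ('D_(L v) f) (L x).
Proof.
have -> : 'D_v (f \o L) = 'D_(L v) f \o L.
  by apply/funext => y; apply: derive_comp_linear.
exact: derive_comp_linear.
Qed.

End LinearChangeOfVariables.

Lemma derive2_invariant_linear (R : realType) (V : normedModType R)
    (L : V -> V) (f : V -> R) (x u v w : V) :
  linear L -> f \o L = f -> L u = v -> L w = - v ->
  (\forall y \near L x, differentiable f y) -> differentiable ('D_v f) (L x) ->
  'D_w ('D_w f) x = 'D_u ('D_u f) x.
Proof.
move=> linL fL Lu Lw df dDf.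
by rewrite -fL !(derive2_comp_linear linL) Lu Lw derive2Nr.
Qed.

Lemma derive_affine_line (R : realType) (V : normedModType R)
    (g : V -> R) (x v : V) (k : R) :
  (forall h : R, h != 0 -> g (h *: v + x) - g x = h * k) -> 'D_v g x = k.
Proof.
move=> gk; rewrite /derive; apply/lim_near_cst => //=; near=> h.
rewrite /= gk; last by near: h; exact: nbhs_dnbhs_neq.
rewrite /GRing.scale /= mulrA mulVf ?mul1r //.
by near: h; exact: nbhs_dnbhs_neq.
Unshelve. all: by end_near.
Qed.

Section PolynomialFunctions.
Variables (R : realType) (V : normedModType R).
Implicit Types f g : V -> R.

Inductive polyfun : (V -> R) -> Prop :=
| polyfun_affine f : (forall x, differentiable f x) ->
    (forall v, exists c, forall x, 'D_v f x = c) -> polyfun f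
| polyfunD f g : polyfun f -> polyfun g -> polyfun (f + g)
| polyfunM f g : polyfun f -> polyfun g -> polyfun (f * g).

Lemma polyfun_eq f g : polyfun f -> f =1 g -> polyfun g.
Proof. by move=> pf /funext <-. Qed.

Lemma polyfun_cst (c : R) : polyfun (cst c).
Proof.
apply: polyfun_affine => [x|v]; first exact: differentiable_cst.
by exists 0 => x; rewrite derive_cst.
Qed.

Lemma polyfun_linear f : linear f -> continuous f -> polyfun f.
Proof.
move=> lf cf.
pose fL : {linear V -> R} := HB.pack f (GRing.isLinear.Build _ _ _ _ f lf).
have cfL : continuous fL by [].
apply: polyfun_affine => [x|v]; first exact: (linear_differentiable _ cfL).
exists (f v) => x.
by rewrite (deriveE _ (linear_differentiable _ cfL)) (diff_lin _ cfL).
Qed.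

Lemma polyfun_differentiable f : polyfun f -> forall x, differentiable f x.
Proof.
move=> pf; elim: pf => {f} [f df _ //|f g _ df _ dg x|f g _ df _ dg x].
- exact: differentiableD.
- exact: differentiableM.
Qed.

Lemma polyfun_derive f v : polyfun f -> polyfun ('D_v f).
Proof.
move=> pf; elim: pf v => {f} [f _ cf v|f g pf IHf pg IHg v|f g pf IHf pg IHg v].
- by have [c Dfc] := cf v; apply: polyfun_eq (polyfun_cst c) _ => x; rewrite Dfc.
- apply: polyfun_eq (polyfunD (IHf v) (IHg v)) _ => x.
  by rewrite deriveD //; exact/diff_derivable/polyfun_differentiable.
- apply: polyfun_eq (polyfunD (polyfunM pf (IHg v)) (polyfunM pg (IHf v))) _ => x.
  by rewrite deriveM //; exact/diff_derivable/polyfun_differentiable.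
Qed.

Lemma polyfunN f : polyfun f -> polyfun (- f).
Proof.
move=> pf; apply: polyfun_eq (polyfunM (polyfun_cst (-1)) pf) _ => x.
by rewrite /= mulN1r.
Qed.

Lemma polyfun_sum (I : Type) (s : seq I) (P : pred I) (F : I -> V -> R) :
  (forall i, polyfun (F i)) -> polyfun (fun x => \sum_(i <- s | P i) F i x).
Proof.
move=> pF; rewrite -fct_sumE.
by apply: big_ind => [|f g|i _]; [exact: polyfun_cst|exact: polyfunD|exact: pF].
Qed.

Lemma polyfun_prod (I : Type) (s : seq I) (P : pred I) (F : I -> V -> R) :
  (forall i, polyfun (F i)) -> polyfun (fun x => \prod_(i <- s | P i) F i x).
Proof.
move=> pF; rewrite -fct_prodE.
by apply: big_ind => [|f g|i _]; [exact: polyfun_cst|exact: polyfunM|exact: pF].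
Qed.

End PolynomialFunctions.
Arguments polyfun_cst {R V}.

Section RationalFunctions.
Variables (R : realType) (V : normedModType R) (D : V -> R).
Hypothesis polyD : polyfun D.
Implicit Types f g : V -> R.

(* Rational functions with denominator a power of D.  They are only compared
   off the zero set of D, where (D x)^-1 is a genuine inverse. *)
Inductive ratfun : (V -> R) -> Prop :=
| ratfun_poly f : polyfun f -> ratfun f
| ratfunV : ratfun (fun x => (D x)^-1)
| ratfunD f g : ratfun f -> ratfun g -> ratfun (f + g)
| ratfunM f g : ratfun f -> ratfun g -> ratfun (f * g)
| ratfun_eq f g : ratfun f -> (forall x, D x != 0 -> f x = g x) -> ratfun g.

Lemma near_denom_neq0 x : D x != 0 -> \forall y \near x, D y != 0.
Proof.
move=> Dx; have cD := differentiable_continuous (polyfun_differentiable polyD x).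
apply: (cD [set y | y != 0]%classic); exists `|D x|; first by rewrite /= normr_gt0.
by move=> y /=; apply: contraTneq => ->; rewrite subr0 ltxx.
Qed.

Lemma ratfun_smooth f : ratfun f ->
  (forall x, D x != 0 -> differentiable f x) /\ (forall v, ratfun ('D_v f)).
Proof.
elim=> {f} [f pf||f g _ [df IHf] _ [dg IHg]|f g rf [df IHf] rg [dg IHg]
            |f g _ [df IHf] fg].
- split=> [x _|v]; first exact: polyfun_differentiable.
  exact/ratfun_poly/polyfun_derive.
- split=> [x Dx|v]; first exact: differentiableV (polyfun_differentiable polyD x) Dx.
  apply: (ratfun_eq (ratfunM (ratfunM ratfunV ratfunV)
                             (ratfun_poly (polyfunN (polyfun_derive v polyD))))) => x Dx.
  rewrite deriveV //; last exact/diff_derivable/polyfun_differentiable.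
  by rewrite /GRing.scale /= -exprVn expr2 mulrN mulNr.
- split=> [x Dx|v]; first exact: differentiableD (df x Dx) (dg x Dx).
  apply: (ratfun_eq (ratfunD (IHf v) (IHg v))) => x Dx.
  by rewrite deriveD //; apply: diff_derivable; [exact: df|exact: dg].
- split=> [x Dx|v]; first exact: differentiableM (df x Dx) (dg x Dx).
  apply: (ratfun_eq (ratfunD (ratfunM rf (IHg v)) (ratfunM rg (IHf v)))) => x Dx.
  by rewrite deriveM //; apply: diff_derivable; [exact: df|exact: dg].
- have near_fg x : D x != 0 -> \forall y \near x, f y = g y.
    by move=> Dx; apply: filterS (near_denom_neq0 Dx) => y; exact: fg.
  split=> [x Dx|v]; first exact: near_eq_differentiable (near_fg x Dx) (df x Dx).
  apply: (ratfun_eq (IHf v)) => x Dx.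
  exact: near_eq_derive (near_fg x Dx).
Qed.

Lemma ratfun_differentiable f x : ratfun f -> D x != 0 -> differentiable f x.
Proof. by move=> /ratfun_smooth[+ _]; apply. Qed.

Lemma ratfun_derive f v : ratfun f -> ratfun ('D_v f).
Proof. by move=> /ratfun_smooth[_]; apply. Qed.

Lemma ratfun_sum (I : Type) (s : seq I) (P : pred I) (F : I -> V -> R) :
  (forall i, ratfun (F i)) -> ratfun (fun x => \sum_(i <- s | P i) F i x).
Proof.
move=> rF; rewrite -fct_sumE.
by apply: big_ind => [|f g|i _]; [exact/ratfun_poly/polyfun_cst|exact: ratfunD|exact: rF].
Qed.

End RationalFunctions.

Section PolynomialMatrices.
Variables (R : realType) (V : normedModType R).

Definition polymx m n (F : V -> 'M[R]_(m, n)) :=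
  forall i j, polyfun (fun x => F x i j).

Lemma polymx_linear m n (F : V -> 'M[R]_(m, n)) :
  linear F -> continuous F -> polymx F.
Proof.
move=> lF cF i j; apply: polyfun_linear => [a x y|x]; first by rewrite lF !mxE.
exact: (@continuous_comp _ _ _ F (fun M : 'M[R]_(m, n) => M i j) x (cF x)
        (@coord_continuous _ _ _ i j (F x))).
Qed.

Lemma polymxN m n (F : V -> 'M[R]_(m, n)) : polymx F -> polymx (fun x => - F x).
Proof. by move=> pF i j; apply: polyfun_eq (polyfunN (pF i j)) _ => x; rewrite mxE. Qed.

Lemma polymx_row m n1 n2 (F : V -> 'M[R]_(m, n1)) (G : V -> 'M[R]_(m, n2)) :
  polymx F -> polymx G -> polymx (fun x => row_mx (F x) (G x)).
Proof.
move=> pF pG i j; apply: polyfun_eq (_ : polyfun (fun x => match fintype.split j with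
  | inl k => F x i k | inr k => G x i k end)) _ => [|x]; last by rewrite mxE.
by case: (fintype.split j).
Qed.

Lemma polymx_col m1 m2 n (F : V -> 'M[R]_(m1, n)) (G : V -> 'M[R]_(m2, n)) :
  polymx F -> polymx G -> polymx (fun x => col_mx (F x) (G x)).
Proof.
move=> pF pG i j; apply: polyfun_eq (_ : polyfun (fun x => match fintype.split i with
  | inl k => F x k j | inr k => G x k j end)) _ => [|x]; last by rewrite mxE.
by case: (fintype.split i).
Qed.

Lemma polyfun_det n (F : V -> 'M[R]_n) : polymx F -> polyfun (fun x => \det (F x)).
Proof.
move=> pF; apply: polyfun_sum => s; apply: polyfunM; first exact: polyfun_cst.
by apply: polyfun_prod => i; exact: pF.
Qed.

Lemma polymx_adj n (F : V -> 'M[R]_n) : polymx F -> polymx (fun x => \adj (F x)).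
Proof.
move=> pF i j; apply: polyfun_eq (_ : polyfun (fun x => cofactor (F x) j i)) _;
  last by move=> x; rewrite mxE.
apply: polyfunM; first exact: polyfun_cst.
by apply: polyfun_det => k l; rewrite /=; apply: polyfun_eq (pF _ _) _ => x; rewrite !mxE.
Qed.

Variable D : V -> R.

Definition ratmx m n (F : V -> 'M[R]_(m, n)) :=
  forall i j, ratfun D (fun x => F x i j).

Lemma polymx_ratmx m n (F : V -> 'M[R]_(m, n)) : polymx F -> ratmx F.
Proof. by move=> pF i j; apply: ratfun_poly. Qed.

Lemma ratmx_cst m n (M : 'M[R]_(m, n)) : ratmx (fun _ => M).
Proof. by move=> i j; apply/ratfun_poly/polyfun_cst. Qed.

Lemma ratmx_mul m n k (F : V -> 'M[R]_(m, n)) (G : V -> 'M[R]_(n, k)) :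
  ratmx F -> ratmx G -> ratmx (fun x => F x *m G x).
Proof.
move=> rF rG i j.
apply: ratfun_eq (ratfun_sum _ _ (fun l => ratfunM (rF i l) (rG l j))) _ => x _.
by rewrite mxE.
Qed.

Lemma ratmx_usub m1 m2 n (F : V -> 'M[R]_(m1 + m2, n)) :
  ratmx F -> ratmx (fun x => usubmx (F x)).
Proof. by move=> rF i j; apply: ratfun_eq (rF _ j) _ => x _; rewrite mxE. Qed.

Lemma ratmx_dsub m1 m2 n (F : V -> 'M[R]_(m1 + m2, n)) :
  ratmx F -> ratmx (fun x => dsubmx (F x)).
Proof. by move=> rF i j; apply: ratfun_eq (rF _ j) _ => x _; rewrite mxE. Qed.

(* Cramer's rule: off the zero set of D = det F, invmx F = D^-1 adj F. *)
Lemma ratmx_invmx n (F : V -> 'M[R]_n) :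
  polymx F -> (forall x, D x = \det (F x)) -> ratmx (fun x => invmx (F x)).
Proof.
move=> pF DF i j.
apply: ratfun_eq (ratfunM (ratfunV D) (ratfun_poly D (polymx_adj pF i j))) _ => x Dx.
have uF : F x \in unitmx by rewrite unitmxE unitfE -DF.
by rewrite mulrfctE /invmx uF !mxE DF.
Qed.

End PolynomialMatrices.

Lemma continuous_fst_comp (T U W : topologicalType) (f : T -> U * W) :
  continuous f -> continuous (fun x => (f x).1).
Proof. by move=> cf x; apply: continuous_comp (cf x) _; apply: cvg_fst. Qed.

Lemma continuous_snd_comp (T U W : topologicalType) (f : T -> U * W) :
  continuous f -> continuous (fun x => (f x).2).
Proof. by move=> cf x; apply: continuous_comp (cf x) _; apply: cvg_snd. Qed.

Local Ltac continuous_proj :=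
  repeat lazymatch goal with
  | |- continuous (fun x => fst (@?f x)) => apply: (continuous_fst_comp (f := f))
  | |- continuous (fun x => snd (@?f x)) => apply: (continuous_snd_comp (f := f))
  end; by move=> ?.

Section QuaternionPolynomialMatrices.
Variables (R : realType) (V : normedModType R).

Lemma continuous_hcomp m n c : continuous (@hcomp R m n c).
Proof.
by case: c => -[|[|[|k]]] hk; rewrite /hcomp /hre /him /hjm /hkm /=; continuous_proj.
Qed.

Lemma polymx_lmul_mx m n (F : V -> hmx R m n) :
  linear F -> continuous F -> polymx (fun x => lmul_mx (F x)).
Proof.
move=> lF cF.
have pF c : polymx (fun x => hcomp c (F x)).
  apply: polymx_linear => [a x y|x]; first by rewrite lF hcompD hcompZ.
  exact: (@continuous_comp _ _ _ F (hcomp c) x (cF x) (@continuous_hcomp _ _ c (F x))).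
have pa : polymx (fun x => hre (F x)) := pF (@Ordinal 4 0 isT).
have pb : polymx (fun x => him (F x)) := pF (@Ordinal 4 1 isT).
have pc : polymx (fun x => hjm (F x)) := pF (@Ordinal 4 2 isT).
have pd : polymx (fun x => hkm (F x)) := pF (@Ordinal 4 3 isT).
rewrite /lmul_mx /hvec /hmk /=.
by repeat first [apply: polymx_row | apply: polymx_col | apply: polymxN | assumption].
Qed.

Variable D : V -> R.

Lemma ratmx_hcomp m n (F : V -> 'M[R]_(m + m + (m + m), n)) c :
  ratmx D F -> ratmx D (fun x => hcomp c (vec_hmx (F x))).
Proof.
move=> rF; case: c => -[|[|[|k]]] hk; rewrite /hcomp /vec_hmx /hmk /hre /him /hjm /hkm /=;
  by repeat first [apply: ratmx_usub | apply: ratmx_dsub].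
Qed.

End QuaternionPolynomialMatrices.

Section PhiRational.
Variables (R : realType) (p r : nat).
Implicit Types Q : Hdom R p r.

Lemma linear_Q0_sub_Q1 : linear (fun Q => Q0 Q - Q1 Q).
Proof. by move=> a Q Q'; rewrite /Q0 /Q1 /= scalerBr opprD addrACA. Qed.

Lemma continuous_Q0_sub_Q1 : continuous (fun Q => Q0 Q - Q1 Q).
Proof.
have cQ0 : continuous (@Q0 R p r) by rewrite /Q0; continuous_proj.
have cQ1 : continuous (@Q1 R p r) by rewrite /Q1; continuous_proj.
by move=> Q; apply: continuousB (cQ0 Q) (cQ1 Q).
Qed.

Lemma linear_Q2 : linear (@Q2 R p r).
Proof. by []. Qed.

Lemma continuous_Q2 : continuous (@Q2 R p r).
Proof. by rewrite /Q2; continuous_proj. Qed.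

Definition det_Phi Q : R := \det (lmul_mx (Q0 Q - Q1 Q)).

Lemma polyfun_det_Phi : polyfun det_Phi.
Proof. exact/polyfun_det/polymx_lmul_mx/continuous_Q0_sub_Q1/linear_Q0_sub_Q1. Qed.

Lemma hvec_Phi Q : det_Phi Q != 0 -> hvec (Phi Q) =
  lmul_mx (Q2 Q) *m (invmx (lmul_mx (Q0 Q - Q1 Q)) *m hvec (hone R p)).
Proof.
move=> DQ; have uA : lmul_mx (Q0 Q - Q1 Q) \in unitmx by rewrite unitmxE unitfE.
by rewrite /Phi hinv_hinvmx // -lmul_mxE /hinvmx vec_hmxK.
Qed.

Lemma ratfun_Phi c a b : ratfun det_Phi (fun Q => hcomp c (Phi Q) a b).
Proof.
have rF : ratmx det_Phi (fun Q =>
    lmul_mx (Q2 Q) *m (invmx (lmul_mx (Q0 Q - Q1 Q)) *m hvec (hone R p))).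
  apply: ratmx_mul; first exact/polymx_ratmx/polymx_lmul_mx/continuous_Q2/linear_Q2.
  apply: ratmx_mul (ratmx_cst _ _).
  apply: ratmx_invmx => //.
  exact: polymx_lmul_mx linear_Q0_sub_Q1 continuous_Q0_sub_Q1.
apply: ratfun_eq (ratmx_hcomp c rF a b) _ => Q DQ.
by rewrite -hvec_Phi // hvecK.
Qed.

End PhiRational.
Arguments det_Phi {R p r}.
Arguments polyfun_det_Phi {R p r}.

Section PhiHarmonic.
Variables (R : realType) (p r : nat).
Implicit Types Q : Hdom R p r.

Definition hcollapse Q : Hdom R p r := (Q0 Q - Q1 Q, 0, Q2 Q).

Lemma linear_hcollapse : linear hcollapse.
Proof.
move=> a Q Q'; congr (_, _, _).
- exact: linear_Q0_sub_Q1.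
- by rewrite /hcollapse /= scaler0 addr0.
Qed.

Lemma Phi_hcollapse Q : Phi (hcollapse Q) = Phi Q.
Proof. by rewrite /Phi /hcollapse /Q0 /Q1 /Q2 /= subr0. Qed.

Lemma det_Phi_hcollapse Q : det_Phi (hcollapse Q) = det_Phi Q.
Proof. by rewrite /det_Phi /hcollapse /Q0 /Q1 /= subr0. Qed.

Lemma hcollapse_dir0 c i j : hcollapse (dir0 R c i j) = dir0 R c i j.
Proof. by rewrite /hcollapse /dir0 /Q0 /Q1 /Q2 /= subr0. Qed.

Lemma hcollapse_dir1 c i j : hcollapse (dir1 R c i j) = - dir0 R c i j.
Proof.
rewrite /hcollapse /dir1 /dir0 /Q0 /Q1 /Q2 /=.
by congr (_, _, _); rewrite ?sub0r ?oppr0.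
Qed.

Lemma derive2_dir1_dir0 (f : Hdom R p r -> R) c i j Q :
  ratfun det_Phi f -> f \o hcollapse = f -> det_Phi Q != 0 ->
  'D_(dir1 R c i j) ('D_(dir1 R c i j) f) Q =
  'D_(dir0 R c i j) ('D_(dir0 R c i j) f) Q.
Proof.
move=> rf fL; rewrite -det_Phi_hcollapse => DQ.
apply: derive2_invariant_linear linear_hcollapse fL
         (hcollapse_dir0 c i j) (hcollapse_dir1 c i j) _ _.
  apply: filterS (near_denom_neq0 polyfun_det_Phi DQ) => y.
  exact (ratfun_differentiable polyfun_det_Phi rf).
exact (ratfun_differentiable polyfun_det_Phi (ratfun_derive polyfun_det_Phi _ rf) DQ).
Qed.

Lemma Q0_sub_Q1_dir2 c i j (h : R) Q :
  Q0 (h *: dir2 R c i j + Q) - Q1 (h *: dir2 R c i j + Q) = Q0 Q - Q1 Q.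
Proof. by rewrite /dir2 /Q0 /Q1 /= !scaler0 !add0r. Qed.

Lemma Phi_dir2 c i j (h : R) Q :
  Phi (h *: dir2 R c i j + Q) =
  h *: hmul (hinj c (delta_mx i j)) (hinv (Q0 Q - Q1 Q)) + Phi Q.
Proof. by rewrite {1}/Phi Q0_sub_Q1_dir2 /Q2 /dir2 /= hmulDl hmulZl. Qed.

Lemma derive2_dir2_Phi c a b c' i j Q :
  'D_(dir2 R c' i j) ('D_(dir2 R c' i j) (fun Q => hcomp c (Phi Q) a b)) Q = 0.
Proof.
have Dw : 'D_(dir2 R c' i j) (fun Q => hcomp c (Phi Q) a b) =
   (fun Q => hcomp c (hmul (hinj c' (delta_mx i j)) (hinv (Q0 Q - Q1 Q))) a b).
  apply/funext => Q'; apply: derive_affine_line => h _.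
  by rewrite Phi_dir2 hcompD hcompZ !mxE addrK.
rewrite Dw; apply: derive_affine_line => h _.
by rewrite Q0_sub_Q1_dir2 subrr mulr0.
Qed.

Lemma semiLaplacian_Phi c a b Q : det_Phi Q != 0 ->
  semiLaplacian (fun Q => hcomp c (Phi Q) a b) Q = 0.
Proof.
move=> DQ; have shape (x y z : R) : y = x -> z = 0 -> - x + y + z = 0.
  by move=> -> ->; rewrite addNr add0r.
apply: shape.
  apply: eq_bigr => c' _; apply: eq_bigr => i _; apply: eq_bigr => j _.
  apply: derive2_dir1_dir0 (ratfun_Phi R c a b) _ DQ.
  by apply/funext => Q'; rewrite /= Phi_hcollapse.
rewrite big1 // => c' _; rewrite big1 // => i _; rewrite big1 // => j _.
exact: derive2_dir2_Phi.
Qed.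

End PhiHarmonic.

Theorem lemma6p1 (R : realType) (p r : nat) (hp : (0 < p)%N) (hr : (0 < r)%N) :
  (* GL_p(H)-invariance: the action preserves U and Phi is constant on orbits *)
  (forall (g : hmx R p p) (Q : Hdom R p r), hinvertible g -> Upq Q ->
     Upq (hact Q g) /\ Phi (hact Q g) = Phi Q)
  (* harmonicity w.r.t. the semi-Euclidean metric *)
  /\ harmonic_on (@Upq R p r) (@Phi R p r).
Proof.
split=> [g Q ig UQ|c a b f Q UQ]; first by split; [exact: Upq_act|exact: Phi_act].
have DQ : det_Phi Q != 0 by rewrite -unitfE -unitmxE Upq_lmul_mx_unit.
have rf := ratfun_Phi R c a b.
split=> [|v|]; last exact: semiLaplacian_Phi.
- exact (ratfun_differentiable polyfun_det_Phi rf DQ).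
- exact (ratfun_differentiable polyfun_det_Phi (ratfun_derive polyfun_det_Phi v rf) DQ).
Qed.
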